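(* Let $S$ be a closed convex subset of $\mathbb{R}^p$ and let $x,y\in S$. Then for any $u\in N_S(x)$ and $v\in N_S(y)$, $$(u-v)^{T}(x-y)\le-2r(|u|+|v|),$$ where $r:=\inf_{w\in\partial S}|c-w|$ is the distance from the midpoint $c:=\tfrac12(x+y)$ to the boundary $\partial S$. Moreover, if $S$ is strongly convex with strong convexity constant $R\in(0,\infty)$, then $$(u-v)^{T}(x-y)\le-\frac{1}{2R}(|u|+|v|)|x-y|^2.$$
   Context: $N_S(u):=\{s\in\mathbb{R}^p:\inf_{z\in S}s^{T}(z-u)\ge0\}$ is the inward normal cone of $S$ at $u$; $|\cdot|$ is the Euclidean norm and $\mathbb{S}_p$ the unit sphere. For $S$ convex, its strong convexity constant is $$R:=\inf\Big\{r\ge0:\ S\subset\bigcap_{u\in\partial S,\ v\in N_S(u)\cap\mathbb{S}_p}\overline{B}_r(u+rv)\Big\},$$ where $\overline{B}_r(c)$ is the closed Euclidean ball of radius $r$ centred at $c$; $S$ is called strongly convex if $R$ is finite. *)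

From HB Require Import structures.
From mathcomp Require Import all_boot all_order all_algebra.
From mathcomp Require Import all_classical all_reals.
Set Implicit Arguments. Unset Strict Implicit. Unset Printing Implicit Defensive.
Import Order.TTheory GRing.Theory Num.Theory.
Local Open Scope classical_set_scope.
Local Open Scope ring_scope.

Section Defs.
Variables (R : realType) (p : nat).
Implicit Types (u v w z s c : 'rV[R]_p) (S : set 'rV[R]_p).

Definition dotp s z : R := \sum_(i < p) s 0 i * z 0 i.
Definition enorm z : R := Num.sqrt (dotp z z).

Definition cball (c : 'rV[R]_p) (r : R) : set 'rV[R]_p :=
  [set z | enorm (z - c) <= r].

Definition convex_set S : Prop :=
  forall a b t, S a -> S b -> 0 <= t <= 1 -> S (t *: a + (1 - t) *: b).

Definition eclosed S : Prop :=
  forall z, (forall e : R, 0 < e -> exists2 w, S w & enorm (w - z) < e) -> S z.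

Definition boundary S : set 'rV[R]_p :=
  [set w | forall e : R, 0 < e ->
     (exists2 z, S z & enorm (z - w) < e) /\ (exists2 z, ~ S z & enorm (z - w) < e)].

(* inward normal cone: N_S(u) = { s | inf_{z in S} s^T (z - u) >= 0 } *)
Definition normal_cone S u : set 'rV[R]_p :=
  [set s | forall z, S z -> 0 <= dotp s (z - u)].

Definition dist_boundary S c : R := inf [set enorm (c - w) | w in boundary S].

Definition sc_const S : R :=
  inf [set r : R | 0 <= r /\
        forall z, S z -> forall u v, boundary S u -> normal_cone S u v ->
          enorm v = 1 -> cball (u + r *: v) r z].

End Defs.

From HB Require Import structures.
From mathcomp Require Import all_boot all_order all_algebra.
From mathcomp Require Import all_classical all_reals.
From mathcomp Require Import ring lra.
Import Order.TTheory GRing.Theory Num.Theory.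
Local Open Scope classical_set_scope.
Local Open Scope ring_scope.
Set Implicit Arguments. Unset Strict Implicit.

(* Let c be a point of S and u a nonzero inward normal at x.  Along the ray
   from c in the direction -u, the affine function z |-> u^T (z - x) decreases
   at rate |u| and is nonnegative on S, so the ray leaves S, through a
   boundary point, within length u^T (c - x) / |u|.  Hence
   dist(c, bd S) |u| <= u^T (c - x); for c the midpoint of x and y, adding
   the inequalities for (x, u) and (y, v) gives the first bound.  For the
   second, x is a boundary point, so for every admissible r the ball of
   radius r tangent at x with inward normal u / |u| contains y, which reads
   |u| |x - y|^2 <= 2 r u^T (y - x); pass to the infimum over r and add
   again. *)

Lemma ler_inf_mul (R : realType) (E : set R) a b : E !=set0 -> 0 <= a ->
  (forall r, E r -> b <= r * a) -> b <= inf E * a.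
Proof.
move=> [r0 Er0] a0 bE; have [a_eq0|a_neq0] := eqVneq a 0.
  by move: (bE _ Er0); rewrite a_eq0 !mulr0.
have a_gt0 : 0 < a by rewrite lt_def a_neq0.
rewrite -ler_pdivrMr //; apply: lb_le_inf; first by exists r0.
by move=> r /bE; rewrite ler_pdivrMr.
Qed.

Section Euclidean.
Variables (R : realType) (p : nat).
Implicit Types (u v w x y z c : 'rV[R]_p) (S : set 'rV[R]_p).

Lemma dotpC u w : dotp u w = dotp w u.
Proof. by apply: eq_bigr => i _; rewrite mulrC. Qed.

Lemma dotpDr u v w : dotp w (u + v) = dotp w u + dotp w v.
Proof. by rewrite /dotp -big_split; apply: eq_bigr => i _; rewrite mxE mulrDr. Qed.

Lemma dotpZr a u w : dotp w (a *: u) = a * dotp w u.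
Proof. by rewrite /dotp mulr_sumr; apply: eq_bigr => i _; rewrite mxE mulrCA. Qed.

Lemma dotpNr u w : dotp w (- u) = - dotp w u.
Proof. by rewrite -scaleN1r dotpZr mulN1r. Qed.

Lemma dotpBr u v w : dotp w (u - v) = dotp w u - dotp w v.
Proof. by rewrite dotpDr dotpNr. Qed.

Lemma dotpZl a u w : dotp (a *: u) w = a * dotp u w.
Proof. by rewrite dotpC dotpZr dotpC. Qed.

Lemma dotpBl u v w : dotp (u - v) w = dotp u w - dotp v w.
Proof. by rewrite dotpC dotpBr !(dotpC w). Qed.

Lemma dotpBB u v x y : dotp (u - v) (x - y) = - (dotp u (y - x) + dotp v (x - y)).
Proof. by rewrite dotpBl -(opprB x y) dotpNr opprD opprK addrC. Qed.

Lemma dotp_ge0 u : 0 <= dotp u u.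
Proof. by apply: sumr_ge0 => i _; rewrite -expr2 sqr_ge0. Qed.

Lemma enorm_ge0 u : 0 <= enorm u.
Proof. exact: sqrtr_ge0. Qed.

Lemma enorm_sqr u : enorm u ^+ 2 = dotp u u.
Proof. by rewrite sqr_sqrtr // dotp_ge0. Qed.

Lemma enormZ a u : enorm (a *: u) = `|a| * enorm u.
Proof.
by rewrite /enorm dotpZl dotpZr mulrA -expr2 sqrtrM ?sqr_ge0 // sqrtr_sqr.
Qed.

Lemma enormN u : enorm (- u) = enorm u.
Proof. by rewrite -scaleN1r enormZ normrN normr1 mul1r. Qed.

Lemma enormB u v : enorm (u - v) = enorm (v - u).
Proof. by rewrite -enormN opprB. Qed.

Lemma enorm0 : enorm (0 : 'rV[R]_p) = 0.
Proof. by rewrite -(scale0r 0) enormZ normr0 mul0r. Qed.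

Lemma enorm_eq0 u : (enorm u == 0) = (u == 0).
Proof.
apply/idP/idP => [|/eqP->]; last by rewrite enorm0.
rewrite -sqrf_eq0 enorm_sqr psumr_eq0 => [/allP u0|i _]; last first.
  by rewrite -expr2 sqr_ge0.
apply/eqP/matrixP => i j; rewrite mxE (ord1 i).
by have /implyP/(_ isT) := u0 j (mem_index_enum j); rewrite -expr2 sqrf_eq0 => /eqP.
Qed.

Lemma enorm_gt0 u : (0 < enorm u) = (u != 0).
Proof. by rewrite lt_def enorm_eq0 enorm_ge0 andbT. Qed.

Lemma enorm_normalize u : u != 0 -> enorm ((enorm u)^-1 *: u) = 1.
Proof.
by rewrite -enorm_gt0 => u0; rewrite enormZ gtr0_norm ?invr_gt0 // mulVf ?gt_eqF.
Qed.

Lemma dotp_normalize u : u != 0 -> dotp u ((enorm u)^-1 *: u) = enorm u.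
Proof.
rewrite -enorm_gt0 => u0.
by rewrite dotpZr -enorm_sqr expr2 mulKf ?gt_eqF.
Qed.

Lemma convex_set_midpoint S x y :
  convex_set S -> S x -> S y -> S (2^-1 *: (x + y)).
Proof.
move=> convS Sx Sy.
have -> : 2^-1 *: (x + y) = 2^-1 *: x + (1 - 2^-1) *: y.
  by apply/matrixP => i j; rewrite !mxE; field.
by apply: convS => //; rewrite invr_ge0 ler0n invf_le1 ?ler1n.
Qed.

Lemma normal_coneZ S x a u :
  0 <= a -> normal_cone S x u -> normal_cone S x (a *: u).
Proof. by move=> a0 Nu z Sz; rewrite dotpZl mulr_ge0 // Nu. Qed.

Lemma normal_cone_boundary S x u :
  S x -> normal_cone S x u -> u != 0 -> boundary S x.
Proof.
rewrite -enorm_gt0 => Sx Nu u0 e e0; split; first by exists x; rewrite ?subrr ?enorm0.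
set t := e / (2 * enorm u); have t0 : 0 < t by rewrite divr_gt0 ?mulr_gt0.
have xtu : x - t *: u - x = - (t *: u) by rewrite addrAC subrr add0r.
exists (x - t *: u).
  move=> /Nu; rewrite xtu dotpNr dotpZr oppr_ge0 leNgt pmulr_rgt0 //.
  by rewrite -enorm_sqr exprn_gt0.
rewrite xtu enormN enormZ gtr0_norm //.
have -> : t * enorm u = e / 2 by rewrite /t; field; rewrite gt_eqF.
by rewrite ltr_pdivrMr // ltr_pMr // ltr1n.
Qed.

Lemma dist_boundary_le_exit S c w d : S c -> enorm w = 1 ->
  (forall t, 0 <= t -> S (c + t *: w) -> t <= d) -> dist_boundary S c <= d.
Proof.
move=> Sc w1 exit_le.
pose T := [set t : R | 0 <= t /\ S (c + t *: w)].
have T0 : T 0 by split; rewrite ?scale0r ?addr0.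
have ubTd : ubound T d by move=> t [t0 St]; apply: exit_le.
have supT : has_sup T by split; [exists 0 | exists d].
set ts := sup T.
have ts0 : 0 <= ts by apply: sup_upper_bound.
have distw t : enorm (c + t *: w - (c + ts *: w)) = `|t - ts|.
  by rewrite opprD addrACA subrr add0r -scalerBl enormZ w1 mulr1.
have bd_exit : boundary S (c + ts *: w).
  move=> e e0; split.
    have [t Tt ts_lt] := sup_adherent e0 supT.
    exists (c + t *: w); first by case: Tt.
    rewrite distw ler0_norm ?subr_le0; last exact: sup_upper_bound.
    by rewrite opprB ltrBlDr addrC -ltrBlDr.
  have e2 : 0 < e / 2 by rewrite divr_gt0.
  exists (c + (ts + e / 2) *: w).
    move=> St; have : ts + e / 2 <= ts.
      by apply: sup_upper_bound => //; split => //; exact: addr_ge0 ts0 (ltW e2).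
    by rewrite gerDl leNgt e2.
  rewrite distw addrAC subrr add0r gtr0_norm //.
  by rewrite ltr_pdivrMr // ltr_pMr // ltr1n.
apply: (@le_trans _ _ ts); last by apply: ge_sup => //; exists 0.
have -> : ts = enorm (c - (c + ts *: w)).
  by rewrite opprD addrA subrr add0r enormN enormZ w1 mulr1 ger0_norm.
apply: ge_inf; last by exists (c + ts *: w).
by exists 0 => _ [z _ <-]; apply: enorm_ge0.
Qed.

Lemma normal_cone_dist_boundary S x c u : S c -> normal_cone S x u ->
  dist_boundary S c * enorm u <= dotp u (c - x).
Proof.
move=> Sc Nu; have [u0|u0] := eqVneq u 0.
  by move: (Nu c Sc); rewrite u0 enorm0 mulr0.
have u_gt0 : 0 < enorm u by rewrite enorm_gt0.
rewrite -ler_pdivlMr //.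
apply: (@dist_boundary_le_exit S c (- ((enorm u)^-1 *: u))) => //.
  by rewrite enormN enorm_normalize.
move=> t _ /Nu.
have -> : c + t *: - ((enorm u)^-1 *: u) - x = c - x - t *: ((enorm u)^-1 *: u).
  by rewrite scalerN addrAC.
by rewrite (dotpBr (c - x)) dotpZr dotp_normalize // subr_ge0 ler_pdivlMr.
Qed.

Lemma cball_tangent_sqr x y n r : enorm n = 1 ->
  cball (x + r *: n) r y -> enorm (x - y) ^+ 2 <= 2 * r * dotp n (y - x).
Proof.
rewrite /cball /= => n1 yB.
have r0 : 0 <= r := le_trans (enorm_ge0 _) yB.
have : enorm (y - x - r *: n) ^+ 2 <= r ^+ 2.
  by rewrite lerXn2r ?nnegrE ?enorm_ge0 // -addrA -opprD.
rewrite enormB; move: (y - x) => a.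
rewrite enorm_sqr dotpBl !dotpBr !dotpZl !dotpZr -!enorm_sqr n1 (dotpC a n).
by nra.
Qed.

Lemma sc_const_normal_cone S x y u :
  S x -> S y -> normal_cone S x u -> 0 < sc_const S ->
  enorm u * enorm (x - y) ^+ 2 <= 2 * sc_const S * dotp u (y - x).
Proof.
move=> Sx Sy Nu; rewrite /sc_const; set E := (X in inf X) => E_gt0.
have [u0|u0] := eqVneq u 0.
  by move: (Nu y Sy); rewrite u0 enorm0 mul0r => ?; rewrite mulr_ge0 // mulr_ge0 // ltW.
have u_gt0 : 0 < enorm u by rewrite enorm_gt0.
pose n := (enorm u)^-1 *: u.
have Nn : normal_cone S x n by apply: normal_coneZ; rewrite ?invr_ge0 ?ltW.
have E0 : E !=set0.
  by apply/set0P; apply: contraTneq E_gt0 => ->; rewrite inf0 ltxx.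
have : enorm (x - y) ^+ 2 <= inf E * (2 * dotp n (y - x)).
  apply: ler_inf_mul E0 _ _; first by rewrite mulr_ge0 ?Nn.
  move=> r [_ inB]; rewrite mulrA (mulrC r); apply: cball_tangent_sqr.
    exact: enorm_normalize.
  exact: inB _ Sy _ _ (normal_cone_boundary Sx Nu u0) Nn (enorm_normalize u0).
rewrite /n dotpZl => ineq.
have -> : 2 * inf E * dotp u (y - x) =
    enorm u * (inf E * (2 * ((enorm u)^-1 * dotp u (y - x)))).
  by field; rewrite gt_eqF.
by rewrite ler_wpM2l // ltW.
Qed.

End Euclidean.

Theorem lemma2 (R : realType) (p : nat) (S : set 'rV[R]_p) (x y : 'rV[R]_p) :
  eclosed S -> convex_set S -> S x -> S y ->
  (forall u v, normal_cone S x u -> normal_cone S y v ->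
     dotp (u - v) (x - y)
       <= - 2 * dist_boundary S (2^-1 *: (x + y)) * (enorm u + enorm v)) /\
  (0 < sc_const S ->
   forall u v, normal_cone S x u -> normal_cone S y v ->
     dotp (u - v) (x - y)
       <= - (2 * sc_const S)^-1 * (enorm u + enorm v) * enorm (x - y) ^+ 2).
Proof.
move=> _ convS Sx Sy; split => [u v Nu Nv | sc_gt0 u v Nu Nv]; rewrite dotpBB.
  have Sc := convex_set_midpoint convS Sx Sy.
  have := normal_cone_dist_boundary Sc Nv; have := normal_cone_dist_boundary Sc Nu.
  have -> : 2^-1 *: (x + y) - x = 2^-1 *: (y - x).
    by apply/matrixP => i j; rewrite !mxE; field.
  have -> : 2^-1 *: (x + y) - y = 2^-1 *: (x - y).
    by apply/matrixP => i j; rewrite !mxE; field.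
  by rewrite !dotpZr; lra.
have hu := sc_const_normal_cone Sx Sy Nu sc_gt0.
have hv := sc_const_normal_cone Sy Sx Nv sc_gt0.
rewrite (enormB y x) in hv.
rewrite !mulNr lerN2 -mulrA mulrC ler_pdivrMr ?mulr_gt0 //.
by nra.
Qed.
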